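(* Let $\kappa\ge 2$. If $L_1,\dots,L_t$ are Latin squares of order $\kappa$ such that $L_a$ and $L_b$ are projective for all $a\neq b$, then $t \leq \kappa - 1$.
   Context: A Latin square of order $\kappa$ is a $\kappa\times\kappa$ matrix with entries from $\{1,\dots,\kappa\}$ in which each symbol occurs exactly once in each row and each column. Two Latin squares $L_1=[l^{(1)}_{ij}]$ and $L_2=[l^{(2)}_{ij}]$ of order $\kappa$ are called projective if both have all diagonal entries equal to $1$ and, for every row index $r$ and every row index $s$, there is exactly one column index $c$ with $l^{(1)}_{rc} = l^{(2)}_{sc}$. *)

From mathcomp Require Import all_boot.
Set Implicit Arguments. Unset Strict Implicit. Unset Printing Implicit Defensive.

(* Symbols {1,...,k} are represented by 'I_k, symbol s+1 being encoded as
   ordinal s; in particular the paper's symbol 1 is the ordinal 0. *)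
Definition square (k : nat) := 'I_k -> 'I_k -> 'I_k.

Definition latin_square (k : nat) (L : square k) : Prop :=
  (forall r s, exists! c, L r c = s) /\ (forall c s, exists! r, L r c = s).

Definition unit_diagonal (k : nat) (L : square k) : Prop :=
  forall i : 'I_k, nat_of_ord (L i i) = 0.

Definition projective (k : nat) (L1 L2 : square k) : Prop :=
  unit_diagonal L1 /\ unit_diagonal L2 /\
  (forall r s : 'I_k, exists! c : 'I_k, L1 r c = L2 s c).

From mathcomp Require Import all_boot.

(* Look at the entry in row 1, column 2 of every square.  Two projective
   squares already agree on the diagonal entry of row 1, so by uniqueness of
   the agreeing column they differ in column 2: the entries are pairwise
   distinct.  None of them is the common diagonal symbol, which occupies
   column 1 of row 1.  So t entries avoid one of the k symbols. *)

Set Implicit Arguments.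
Unset Strict Implicit.
Unset Printing Implicit Defensive.

Lemma latin_row_inj (k : nat) (L : square k) (r : 'I_k) :
  latin_square L -> injective (L r).
Proof.
move=> [Hrow _] c c' Ecc'.
have [c0 [_ Huniq]] := Hrow r (L r c').
by rewrite -(Huniq c Ecc') (Huniq c' erefl).
Qed.

Lemma projective_diag_eq (k : nat) (L1 L2 : square k) (i : 'I_k) :
  projective L1 L2 -> L1 i i = L2 i i.
Proof. by move=> [d1 [d2 _]]; apply: val_inj; rewrite /= d1 d2. Qed.

Lemma projective_agree_diag (k : nat) (L1 L2 : square k) (i c : 'I_k) :
  projective L1 L2 -> L1 i c = L2 i c -> c = i.
Proof.
move=> Hp Ec; have [_ [_ Hcol]] := Hp.
have [c0 [_ Huniq]] := Hcol i i.
by rewrite -(Huniq c Ec) (Huniq i (projective_diag_eq i Hp)).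
Qed.

Lemma card_lt_inj_avoid (aT rT : finType) (f : aT -> rT) (y : rT) :
  injective f -> (forall a, f a != y) -> #|aT| < #|rT|.
Proof.
move=> finj fy; rewrite -(card_codom finj); apply/proper_card/properP.
by split; [exact/subsetP | exists y => //; apply/codomP => -[a /esym/eqP]; apply/negP].
Qed.

Theorem theorem27 (k t : nat) (L : 'I_t -> square k) :
  2 <= k ->
  (forall a, latin_square (L a)) ->
  (forall a b, a != b -> projective (L a) (L b)) ->
  t <= k - 1.
Proof.
move=> hk Hlat Hproj.
case: t L Hlat Hproj => [|t] L Hlat Hproj; first exact: leq0n.
pose i0 : 'I_k := Ordinal (ltnW hk); pose c1 : 'I_k := Ordinal hk.
have c1_neq_i0 : c1 != i0 by [].
pose f a := L a i0 c1.
have finj : injective f.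
  move=> a b Eab; apply/eqP/negPn/negP => /Hproj Hab.
  by move: c1_neq_i0; rewrite (projective_agree_diag Hab Eab) eqxx.
have f_avoid a : f a != L ord0 i0 i0.
  have -> : L ord0 i0 i0 = L a i0 i0.
    by case: (eqVneq ord0 a) => [-> // | /Hproj/projective_diag_eq].
  by apply: contra c1_neq_i0 => /eqP/(latin_row_inj (Hlat a)) ->.
have := card_lt_inj_avoid finj f_avoid; rewrite !card_ord => ltk.
by rewrite -ltnS subn1 prednK // ltnW.
Qed.
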